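(* Let $\mathcal{H}_A,\mathcal{H}_B,\mathcal{H}_C$ be finite-dimensional complex Hilbert spaces and let $|\psi\rangle\in\mathcal{H}_A\otimes\mathcal{H}_B\otimes\mathcal{H}_C$ be a unit vector, with $\rho=|\psi\rangle\langle\psi|$. Let $d_A$ be the rank of the reduced state $\rho_A=\mathrm{Tr}_{BC}\,\rho$, and assume $d_A\ge 2$. Then $$\sqrt{\tfrac{2}{d_A(d_A-1)}}\; N_{A:CB}\;\le\; N_{AC:B}+N_{AB:C},$$ where $N_{A:CB}$, $N_{AC:B}$, $N_{AB:C}$ denote the negativities of $\rho$ with respect to the bipartitions $A|BC$, $AC|B$ and $AB|C$ respectively.
   Context: For a bipartite state $\rho_{XY}$ on $\mathcal{H}_X\otimes\mathcal{H}_Y$, the negativity is $N_{X:Y}=\frac{\|\rho_{XY}^{T_X}\|_1-1}{2}$, where $\rho_{XY}^{T_X}$ is the partial transpose with respect to subsystem $X$ (in any fixed basis) and $\|\sigma\|_1=\mathrm{Tr}\sqrt{\sigma^\dagger\sigma}$ is the trace norm. For a tripartite state, $N_{AC:B}$ means the negativity for the bipartition with $X=AC$ and $Y=B$, and similarly for the others. *)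

From HB Require Import structures.
From mathcomp Require Import all_boot all_order all_algebra.
From mathcomp Require Import algC.
Set Implicit Arguments. Unset Strict Implicit. Unset Printing Implicit Defensive.
Import Order.TTheory GRing.Theory Num.Theory Num.Def.
Local Open Scope ring_scope.

(* H_A = C^dA, H_B = C^dB, H_C = C^dC; the basis of H_A (x) H_B (x) H_C is
   indexed by the finite type idx3 dA dB dC = 'I_dA * 'I_dB * 'I_dC,
   with elements ((a, b), c). *)
Definition idx3 (dA dB dC : nat) := ('I_dA * 'I_dB * 'I_dC)%type.

Definition adjmx m n (M : 'M[algC]_(m, n)) : 'M[algC]_(n, m) :=
  map_mx (fun x : algC => x^*) (M^T).

(* Square root of a positive semidefinite (hence normal) matrix via its
   spectral decomposition A = P^-1 diag(l) P (P unitary): sqrt A = P^-1 diag(sqrt l) P *)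
Definition sqrtmx n (A : 'M[algC]_n) : 'M[algC]_n :=
  invmx (spectralmx A) *m diag_mx (map_mx sqrtC (spectral_diag A)) *m spectralmx A.

Definition trnorm n (s : 'M[algC]_n) : algC := \tr (sqrtmx (adjmx s *m s)).

Definition mx_of (T : finType) (f : T -> T -> algC) : 'M[algC]_#|T| :=
  \matrix_(i, j) f (enum_val i) (enum_val j).

Definition negativity_of_pt (T : finType) (ptrho : T -> T -> algC) : algC :=
  (trnorm (mx_of ptrho) - 1) / 2%:R.

Section Tri.
Variables dA dB dC : nat.
Local Notation T := (idx3 dA dB dC).

Definition proj_state (psi : T -> algC) : T -> T -> algC :=
  fun x y => psi x * (psi y)^*.

Definition ptA (rho : T -> T -> algC) : T -> T -> algC :=
  fun x y => rho ((y.1.1, x.1.2), x.2) ((x.1.1, y.1.2), y.2).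
Definition ptAC (rho : T -> T -> algC) : T -> T -> algC :=
  fun x y => rho ((y.1.1, x.1.2), y.2) ((x.1.1, y.1.2), x.2).
Definition ptAB (rho : T -> T -> algC) : T -> T -> algC :=
  fun x y => rho ((y.1.1, y.1.2), x.2) ((x.1.1, x.1.2), y.2).

Definition neg_A_CB (rho : T -> T -> algC) := negativity_of_pt (ptA rho).
Definition neg_AC_B (rho : T -> T -> algC) := negativity_of_pt (ptAC rho).
Definition neg_AB_C (rho : T -> T -> algC) := negativity_of_pt (ptAB rho).

Definition reducedA (rho : T -> T -> algC) : 'M[algC]_dA :=
  \matrix_(i, i') \sum_(j : 'I_dB) \sum_(k : 'I_dC) rho ((i, j), k) ((i', j), k).
End Tri.

From HB Require Import structures.
From mathcomp Require Import all_boot all_order all_algebra.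
From mathcomp Require Import algC.
From mathcomp Require Import ring zify.
Set Implicit Arguments. Unset Strict Implicit. Unset Printing Implicit Defensive.
Import Order.TTheory GRing.Theory Num.Theory.
Local Open Scope ring_scope.

(** For a pure state psi on S x R, the partial transpose rho^{T_S} of rho = |psi><psi| satisfies
   (rho^{T_S})^dagger rho^{T_S} = rho_S^T (x) rho_R, so its trace norm is
   (sum_i sqrt l_i) (sum_j sqrt m_j), where l and m are the spectra of the
   two reduced states; no Schmidt decomposition is needed.  Both spectra sum
   to 1 and have the same purity P, and for x = sum_i sqrt l_i one has
   1 + sqrt (2 (1 - P)) <= x^2 <= 1 + sqrt (k (k - 1) (1 - P)) when at most k
   of the l_i are nonzero; these bounds pass to the product of the two sums.
   Finally, expanding
     sum |psi_abc psi_a'b'c' - psi_ab'c psi_a'bc' - psi_abc' psi_a'b'c + psi_ab'c' psi_a'bc|^2 >= 0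
   gives 1 - P_A <= (1 - P_AC) + (1 - P_AB) for the purities of the cuts A|BC,
   AC|B and AB|C, which links the upper bound for the cut A|BC with the lower
   bounds for the two other cuts. *)

Lemma sum_comp_bij (R : nmodType) (T T' : finType) (e : T' -> T) (F : T -> R) :
  bijective e -> \sum_x F (e x) = \sum_z F z.
Proof. by move=> e_bij; rewrite [RHS](reindex e) //; apply: onW_bij. Qed.

Lemma sum_enum_val (R : nmodType) (T : finType) (F : T -> R) :
  \sum_(i < #|T|) F (enum_val i) = \sum_x F x.
Proof. exact/sum_comp_bij/enum_val_bij. Qed.

Lemma sum_enum_rank (R : nmodType) (T : finType) (F : 'I_#|T| -> R) :
  \sum_x F (enum_rank x) = \sum_i F i.
Proof. exact/sum_comp_bij/enum_rank_bij. Qed.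

Lemma sum_pairE (R : nmodType) (S T : finType) (F : S * T -> R) :
  \sum_x F x = \sum_s \sum_t F (s, t).
Proof. by rewrite pair_bigA; apply: eq_bigr => -[]. Qed.

Lemma exchange_big2 (R : nmodType) (I J K L : finType) (F : I -> J -> K -> L -> R) :
  \sum_i \sum_j \sum_k \sum_l F i j k l = \sum_k \sum_l \sum_i \sum_j F i j k l.
Proof.
transitivity (\sum_i \sum_k \sum_l \sum_j F i j k l).
  by apply: eq_bigr => i _; rewrite exchange_big; apply: eq_bigr => k _; exact: exchange_big.
by rewrite exchange_big; apply: eq_bigr => k _; exact: exchange_big.
Qed.

Lemma sum_split_offdiag (R : nmodType) (I : finType) (F : I -> I -> R) :
  \sum_i \sum_j F i j = \sum_i F i i + \sum_(p : I * I | p.1 != p.2) F p.1 p.2.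
Proof.
rewrite (eq_bigr (fun i => F i i + \sum_(j | j != i) F i j)); last first.
  by move=> i _; rewrite (bigD1 i).
rewrite big_split /= (pair_big_dep xpredT (fun i j => j != i)) /=.
by congr (_ + _); apply: eq_bigl => p; rewrite eq_sym.
Qed.

Lemma card_offdiag (I : finType) (Z : pred I) :
  #|[pred p : I * I | (p.1 != p.2) && ((p.1 \in Z) && (p.2 \in Z))]| =
  (#|Z| * (#|Z| - 1))%N.
Proof.
rewrite -[LHS]sum1_card.
rewrite (eq_bigl (fun p : I * I => (fun i => i \in Z) p.1 &&
   (fun i j => (j \in Z) && (j != i)) p.1 p.2)); last first.
  by move=> p; rewrite !inE /= eq_sym; case: (p.2 != p.1); case: (p.1 \in Z); case: (p.2 \in Z).
rewrite -(pair_big_dep (fun i => i \in Z) (fun i j => (j \in Z) && (j != i))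
   (fun _ _ => 1%N)) /=.
rewrite (eq_bigr (fun _ => #|Z| - 1)%N); first by rewrite sum_nat_const mulnC.
move=> i iZ; rewrite sum1_card (cardD1 i Z) iZ add1n subSS subn0.
by apply: eq_card => j; rewrite !inE andbC.
Qed.

Section RealInequalities.
Variable R : numDomainType.

Lemma sqr_sum_le_card_mul_sum_sqr (I : finType) (B : pred I) (a : I -> R) :
  (forall i, 0 <= a i) ->
  (\sum_(i | B i) a i) ^+ 2 <= #|B|%:R * \sum_(i | B i) a i ^+ 2.
Proof.
move=> a_ge0.
have card_sum : #|B|%:R = \sum_(i | B i) (1 : R) by rewrite sumr_const.
have sum_sqr_diff : \sum_(i | B i) \sum_(j | B j) (a i - a j) ^+ 2 =
    2 * (#|B|%:R * \sum_(i | B i) a i ^+ 2 - (\sum_(i | B i) a i) ^+ 2).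
  transitivity (\sum_(i | B i) (#|B|%:R * a i ^+ 2 + \sum_(j | B j) a j ^+ 2
                                 - 2 * (a i * \sum_(j | B j) a j))).
    apply: eq_bigr => i _.
    rewrite card_sum mulr_suml !mulr_sumr -big_split /= -sumrB.
    by apply: eq_bigr => j _; ring.
  rewrite sumrB big_split /= -!mulr_sumr -mulr_suml sumr_const.
  by rewrite -mulr_natl expr2; ring.
have : 0 <= \sum_(i | B i) \sum_(j | B j) (a i - a j) ^+ 2.
  apply: sumr_ge0 => i _; apply: sumr_ge0 => j _.
  by rewrite -realEsqr realB // ger0_real.
by rewrite sum_sqr_diff pmulr_rge0 // subr_ge0.
Qed.

Lemma two_sum_offdiag_sqr_le (I : finType) (a : I -> I -> R) :
  (forall i j, 0 <= a i j) -> (forall i j, a i j = a j i) ->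
  2 * \sum_(p : I * I | p.1 != p.2) a p.1 p.2 ^+ 2 <=
    (\sum_(p : I * I | p.1 != p.2) a p.1 p.2) ^+ 2.
Proof.
move=> a_ge0 a_sym; set Y := \sum_(p : I * I | p.1 != p.2) a p.1 p.2.
rewrite [X in _ <= X]expr2 {1}/Y mulr_suml mulr_sumr.
apply: ler_sum => p p12.
have twice : 2 * a p.1 p.2 <= Y.
  have p21 : (p.2, p.1) != p.
    by case: p p12 => x y /=; apply: contra; rewrite xpair_eqE => /andP[/eqP ->].
  rewrite /Y (bigD1 p) // (bigD1 (p.2, p.1)) /=; last by rewrite eq_sym p12 p21.
  rewrite (a_sym p.2 p.1) mulr_natl addrA -mulr2n lerDl.
  by apply: sumr_ge0 => q _; apply: a_ge0.
by rewrite expr2 mulrA mulrC ler_wpM2l.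
Qed.

Lemma mulr_between_sqr (x y lo hi : R) : 0 <= x -> 0 <= y ->
  lo <= x ^+ 2 <= hi -> lo <= y ^+ 2 <= hi -> lo <= x * y <= hi.
Proof.
move=> x_ge0 y_ge0; wlog xy : x y x_ge0 y_ge0 / x <= y => [hw|].
  have [xy|/ltW yx] := real_leP (ger0_real x_ge0) (ger0_real y_ge0).
    exact: hw.
  by move=> hx hy; rewrite mulrC; apply: hw.
move=> /andP[lo_x _] /andP[_ y_hi]; apply/andP; split.
  by apply: le_trans lo_x _; rewrite expr2 ler_wpM2l.
by apply: le_trans y_hi; rewrite expr2 ler_wpM2r.
Qed.

End RealInequalities.

Lemma sqrtC_le (a y : algC) : 0 <= a -> 0 <= y -> a <= y ^+ 2 -> sqrtC a <= y.
Proof.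
by move=> a_ge0 y_ge0 ay; rewrite -(sqrCK y_ge0) ler_sqrtC // nnegrE exprn_ge0.
Qed.

Lemma le_sqrtC (a y : algC) : 0 <= y -> y ^+ 2 <= a -> y <= sqrtC a.
Proof.
move=> y_ge0 ya; have a_ge0 : 0 <= a by apply: le_trans ya; apply: exprn_ge0.
by rewrite -(sqrCK y_ge0) ler_sqrtC // nnegrE // exprn_ge0.
Qed.

Lemma sqrtC_addr_le (a b : algC) : 0 <= a -> 0 <= b ->
  sqrtC (a + b) <= sqrtC a + sqrtC b.
Proof.
move=> a_ge0 b_ge0; apply: sqrtC_le; rewrite ?addr_ge0 ?sqrtC_ge0 //.
by rewrite sqrrD !sqrtCK addrAC lerDl mulrn_wge0 // mulr_ge0 ?sqrtC_ge0.
Qed.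

Section SumSqrtC.
Variables (I : finType) (d : I -> algC).
Hypotheses (d_ge0 : forall i, 0 <= d i) (sum_d : \sum_i d i = 1).

Local Notation a i j := (sqrtC (d i) * sqrtC (d j)).

Let a_ge0 i j : 0 <= a i j.
Proof. by rewrite mulr_ge0 ?sqrtC_ge0. Qed.

Let a_diag i : a i i = d i.
Proof. by rewrite -expr2 sqrtCK. Qed.

Lemma sqr_sum_sqrtC_sub1 :
  (\sum_i sqrtC (d i)) ^+ 2 - 1 = \sum_(p : I * I | p.1 != p.2) a p.1 p.2.
Proof.
rewrite expr2 big_distrlr /= sum_split_offdiag -sum_d.
by rewrite (eq_bigr _ (fun i _ => a_diag i)) addrC addKr.
Qed.

Lemma one_sub_sum_sqr :
  1 - \sum_i d i ^+ 2 = \sum_(p : I * I | p.1 != p.2) a p.1 p.2 ^+ 2.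
Proof.
have -> : (1 : algC) = (\sum_i d i) ^+ 2 by rewrite sum_d expr1n.
rewrite expr2 big_distrlr /= sum_split_offdiag.
rewrite (eq_bigr _ (fun i _ => esym (expr2 (d i)))) addrC addKr.
by apply: eq_bigr => p _; rewrite exprMn !sqrtCK.
Qed.

Lemma one_sub_sum_sqr_ge0 : 0 <= 1 - \sum_i d i ^+ 2.
Proof. by rewrite one_sub_sum_sqr; apply: sumr_ge0 => p _; rewrite exprn_ge0 ?a_ge0. Qed.

Lemma sqr_sum_sqrtC_lower :
  1 + sqrtC (2 * (1 - \sum_i d i ^+ 2)) <= (\sum_i sqrtC (d i)) ^+ 2.
Proof.
rewrite addrC -lerBrDr; apply: sqrtC_le.
- by rewrite mulr_ge0 ?one_sub_sum_sqr_ge0.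
- by rewrite sqr_sum_sqrtC_sub1 sumr_ge0 // => p _; apply: a_ge0.
rewrite sqr_sum_sqrtC_sub1 one_sub_sum_sqr.
apply: (two_sum_offdiag_sqr_le (a := fun i j => a i j)) => // i j.
exact: mulrC.
Qed.

Lemma sqr_sum_sqrtC_upper (k : nat) : leq #|[pred i | d i != 0]| k ->
  (\sum_i sqrtC (d i)) ^+ 2 <= 1 + sqrtC ((k * (k - 1))%:R * (1 - \sum_i d i ^+ 2)).
Proof.
set Z := [pred i | d i != 0] => Zk.
rewrite addrC -lerBlDr; apply: le_sqrtC.
  by rewrite sqr_sum_sqrtC_sub1 sumr_ge0 // => p _; apply: a_ge0.
pose B (p : I * I) := (p.1 != p.2) && ((p.1 \in Z) && (p.2 \in Z)).
have off_support p : p.1 != p.2 -> ~~ B p -> a p.1 p.2 = 0.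
  move=> p12; rewrite /B p12 /= negb_and !inE !negbK.
  by case/orP => /eqP d0; rewrite d0 sqrtC0 ?mul0r ?mulr0.
have sum_on_B (F : algC -> algC) : F 0 = 0 ->
    \sum_(p | p.1 != p.2) F (a p.1 p.2) = \sum_(p | B p) F (a p.1 p.2).
  move=> F0; rewrite [LHS](bigID B) /= [X in _ + X]big1 ?addr0.
    by apply: eq_bigl => p; rewrite /B andb_idl // => /andP[].
  by move=> p /andP[p12 nB]; rewrite off_support.
rewrite sqr_sum_sqrtC_sub1 one_sub_sum_sqr (sum_on_B id) // (sum_on_B (fun x => x ^+ 2)) ?expr0n //.
apply: le_trans (sqr_sum_le_card_mul_sum_sqr _ (fun p => a_ge0 p.1 p.2)) _.
rewrite card_offdiag ler_wpM2r ?ler_nat ?leq_mul ?leq_sub2r //.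
by rewrite sumr_ge0 // => p _; rewrite exprn_ge0 ?a_ge0.
Qed.

End SumSqrtC.

Lemma mulVmxE (R : comUnitRingType) n (P : 'M[R]_n) a b : P \in unitmx ->
  \sum_k invmx P a k * P k b = (a == b)%:R.
Proof. by move=> Pu; have /matrixP/(_ a b) := mulVmx Pu; rewrite !mxE. Qed.

Lemma mulmxVE (R : comUnitRingType) n (P : 'M[R]_n) a b : P \in unitmx ->
  \sum_k P a k * invmx P k b = (a == b)%:R.
Proof. by move=> Pu; have /matrixP/(_ a b) := mulmxV Pu; rewrite !mxE. Qed.

Lemma mul_mx_diag_mxE (R : pzRingType) m n p (A : 'M[R]_(m, n)) (d : 'rV[R]_n)
    (B : 'M[R]_(n, p)) i j :
  (A *m diag_mx d *m B) i j = \sum_k A i k * d 0 k * B k j.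
Proof. by rewrite mxE; apply: eq_bigr => k _; rewrite mul_mx_diag mxE. Qed.

Lemma mxrank_mxsub (F : fieldType) m n m' n' (f : 'I_m' -> 'I_m) (g : 'I_n' -> 'I_n)
    (A : 'M[F]_(m, n)) :
  (\rank (mxsub f g A) <= \rank A)%N.
Proof.
have -> : mxsub f g A = rowsub f 1%:M *m A *m colsub g 1%:M.
  by rewrite mxsubrc -mulmxA mulmx_colsub mul_rowsub_mx mul1mx mulmx1.
by apply: leq_trans (mxrankM_maxl _ _) _; apply: mxrankM_maxr.
Qed.

Lemma card_diag_mx_neq0 (F : fieldType) n (d : 'rV[F]_n) :
  leq #|[pred k | d 0 k != 0]| (\rank (diag_mx d)).
Proof.
set Z := [pred k | d 0 k != 0]; pose z := @enum_val _ (mem Z).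
pose E : 'M[F]_(#|Z|, n) := \matrix_(i, j) (j == z i)%:R.
pose E' : 'M[F]_(n, #|Z|) := \matrix_(j, i) ((j == z i)%:R / d 0 (z i)).
have EdE' : E *m diag_mx d *m E' = 1%:M.
  apply/matrixP => i i'; rewrite mul_mx_diag_mxE (bigD1 (z i)) //= big1 ?addr0.
    rewrite !mxE eqxx mul1r.
    have [<-|ne] := eqVneq i i'; first by rewrite eqxx mul1r mulfV //; apply: (enum_valP i).
    by rewrite (inj_eq enum_val_inj) (negbTE ne) mul0r mulr0.
  by move=> j /negbTE nj; rewrite !mxE nj !mul0r.
rewrite -[X in (X <= _)%N](mxrank1 F) -EdE'.
by apply: leq_trans (mxrankM_maxl _ _) _; apply: mxrankM_maxr.
Qed.

Lemma adjmxK m n (A : 'M[algC]_(m, n)) : adjmx (adjmx A) = A.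
Proof. exact: trmxCK. Qed.

Lemma adjmxM m n p (A : 'M[algC]_(m, n)) (B : 'M[algC]_(n, p)) :
  adjmx (A *m B) = adjmx B *m adjmx A.
Proof. by rewrite /adjmx trmx_mul map_mxM. Qed.

Section NormalSpectrum.
Variables (n : nat) (A : 'M[algC]_n).
Hypothesis A_normal : A \is normalmx.
Local Notation P := (spectralmx A).
Local Notation D := (spectral_diag A).

Let P_unit : P \in unitmx. Proof. exact: spectral_unit. Qed.
Let A_spectral : A = invmx P *m diag_mx D *m P. Proof. exact/orthomx_spectralP. Qed.

Lemma diag_mx_spectral : diag_mx D = P *m A *m invmx P.
Proof. by rewrite [X in P *m X]A_spectral !mulmxA mulmxV // mul1mx mulmxK. Qed.

Lemma sum_spectral_diag : \sum_k D 0 k = \tr A.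
Proof. by rewrite [in RHS]A_spectral mxtrace_mulC mulmxA mulmxV // mul1mx mxtrace_diag. Qed.

Lemma sum_spectral_diag_sqr : \sum_k D 0 k ^+ 2 = \tr (A *m A).
Proof.
have -> : A *m A = invmx P *m diag_mx (\row_k (D 0 k ^+ 2)) *m P.
  rewrite [in LHS]A_spectral -!mulmxA (mulmxA P) mulmxV // mul1mx.
  rewrite (mulmxA (diag_mx D)) mulmx_diag.
  by congr (_ *m (diag_mx _ *m _)); apply/rowP => k; rewrite !mxE expr2.
by rewrite mxtrace_mulC mulmxA mulmxV // mul1mx mxtrace_diag; apply: eq_bigr => k _; rewrite mxE.
Qed.

Lemma card_spectral_diag_neq0 : leq #|[pred k | D 0 k != 0]| (\rank A).
Proof.
apply: leq_trans (card_diag_mx_neq0 _) _; rewrite diag_mx_spectral.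
by apply: leq_trans (mxrankM_maxl _ _) _; apply: mxrankM_maxr.
Qed.

End NormalSpectrum.

Definition gram m n (G : 'M[algC]_(m, n)) : 'M[algC]_m := G *m adjmx G.

Section Gram.
Variables (m n : nat) (G : 'M[algC]_(m, n)).

Lemma adjmx_gram : adjmx (gram G) = gram G.
Proof. by rewrite /gram adjmxM adjmxK. Qed.

Lemma gram_normal : gram G \is normalmx.
Proof. by apply/normalmxP; rewrite -[(_ ^t* )%sesqui]/(adjmx _) adjmx_gram. Qed.

Lemma spectral_diag_gram_ge0 k : 0 <= spectral_diag (gram G) 0 k.
Proof.
set P := spectralmx (gram G).
have /matrixP/(_ k k) := diag_mx_spectral gram_normal.
rewrite mxE eqxx mulr1n => ->.
rewrite invmx_unitary ?spectral_unitarymx // -/P.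
have -> : P *m gram G *m (P ^t* )%sesqui = gram (P *m G) by rewrite /gram adjmxM !mulmxA.
by rewrite mxE sumr_ge0 // => j _; rewrite !mxE mul_conjC_ge0.
Qed.

Lemma mxrank_gram : (\rank G <= \rank (gram G))%N.
Proof.
set K := kermx (gram G).
have KG0 : K *m G = 0.
  have : gram (K *m G) = 0 by rewrite /gram adjmxM !mulmxA -(mulmxA K) mulmx_ker mul0mx.
  move=> /matrixP gram0; apply/matrixP => i j; have /eqP := gram0 i i.
  rewrite !mxE psumr_eq0 => [/allP/(_ j (mem_index_enum _))|l _]; last by rewrite !mxE mul_conjC_ge0.
  by rewrite !mxE mul_conjC_eq0 => /eqP.
have : (K <= kermx G)%MS by apply/sub_kermxP.
move/mxrankS; rewrite !mxrank_ker.
by have := rank_leq_row (gram G); have := rank_leq_row G; lia.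
Qed.

End Gram.

Lemma adjmx_mul_normal n (X : 'M[algC]_n) : adjmx X *m X \is normalmx.
Proof. by rewrite -[X in _ *m X]adjmxK gram_normal. Qed.

Lemma trnorm_spectral n (X : 'M[algC]_n) :
  trnorm X = \sum_k sqrtC (spectral_diag (adjmx X *m X) 0 k).
Proof.
rewrite /trnorm /sqrtmx mxtrace_mulC mulmxA mulmxV ?spectral_unit // mul1mx mxtrace_diag.
by apply: eq_bigr => k _; rewrite mxE.
Qed.

Lemma diag_mx_map_intertwine (R : idomainType) m n (D : 'rV[R]_m) (d : 'rV[R]_n)
    (V : 'M[R]_(m, n)) (f : R -> R) :
  diag_mx D *m V = V *m diag_mx d ->
  diag_mx (map_mx f D) *m V = V *m diag_mx (map_mx f d).
Proof.
move=> /matrixP DV; apply/matrixP => i j; have := DV i j.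
rewrite !mul_diag_mx !mul_mx_diag !mxE.
have [->|nz] := eqVneq (V i j) 0; first by rewrite !mulr0 !mul0r.
by rewrite [V i j * _]mulrC => /(mulIf nz) ->; rewrite mulrC.
Qed.

Lemma trnorm_diag_factor n m (X : 'M[algC]_n) (W1 : 'M_(n, m)) (W2 : 'M_(m, n))
    (d : 'rV[algC]_m) :
  W1 *m W2 = 1%:M -> W2 *m W1 = 1%:M ->
  adjmx X *m X = W1 *m diag_mx d *m W2 ->
  trnorm X = \sum_j sqrtC (d 0 j).
Proof.
move=> W12 W21 XX; rewrite trnorm_spectral.
have /orthomx_spectralP := adjmx_mul_normal X.
set A := adjmx X *m X; set P := spectralmx A; set D := spectral_diag A => AP.
have P_unit : P \in unitmx by exact: spectral_unit.
pose V := P *m W1; pose V' := W2 *m invmx P.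
have VV' : V *m V' = 1%:M by rewrite mulmxA -(mulmxA P) W12 mulmx1 mulmxV.
have V'V : V' *m V = 1%:M by rewrite mulmxA -(mulmxA W2) mulVmx // mulmx1.
have DV : diag_mx D *m V = V *m diag_mx d.
  transitivity (P *m A *m W1).
    by rewrite [in RHS]AP !mulmxA mulmxV // mul1mx.
  by rewrite /A XX !mulmxA -(mulmxA _ W2) W21 mulmx1.
have tr_sqrt k (e : 'rV[algC]_k) : \sum_j sqrtC (e 0 j) = \tr (diag_mx (map_mx sqrtC e)).
  by rewrite mxtrace_diag; apply: eq_bigr => j _; rewrite mxE.
rewrite !tr_sqrt -[diag_mx (map_mx sqrtC D)]mulmx1 -VV' mulmxA.
by rewrite (diag_mx_map_intertwine _ DV) mxtrace_mulC mulmxA V'V mul1mx.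
Qed.

Lemma trnorm_mx_of_factor (T U : finType) (f : T -> T -> algC)
    (w1 : T -> U -> algC) (w2 : U -> T -> algC) (d : U -> algC) :
  (forall x y, \sum_u w1 x u * w2 u y = (x == y)%:R) ->
  (forall u v, \sum_x w2 u x * w1 x v = (u == v)%:R) ->
  (forall x y, \sum_z (f z x)^* * f z y = \sum_u w1 x u * d u * w2 u y) ->
  trnorm (mx_of f) = \sum_u sqrtC (d u).
Proof.
move=> w12 w21 ff.
pose W1 : 'M[algC]_(#|T|, #|U|) := \matrix_(i, j) w1 (enum_val i) (enum_val j).
pose W2 : 'M[algC]_(#|U|, #|T|) := \matrix_(i, j) w2 (enum_val i) (enum_val j).
rewrite (@trnorm_diag_factor _ _ _ W1 W2 (\row_j d (enum_val j))).
- by rewrite -(sum_enum_val (fun u => sqrtC (d u))); apply: eq_bigr => j _; rewrite mxE.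
- apply/matrixP => i k; rewrite !mxE; under eq_bigr do rewrite !mxE.
  by rewrite (sum_enum_val (fun u => w1 (enum_val i) u * w2 u (enum_val k))) w12
    (inj_eq enum_val_inj).
- apply/matrixP => i k; rewrite !mxE; under eq_bigr do rewrite !mxE.
  by rewrite (sum_enum_val (fun x => w2 (enum_val i) x * w1 x (enum_val k))) w21
    (inj_eq enum_val_inj).
- apply/matrixP => i k; rewrite mul_mx_diag_mxE !mxE; under eq_bigr do rewrite !mxE.
  rewrite (sum_enum_val (fun z => (f z (enum_val i))^* * f z (enum_val k))) ff.
  by rewrite -sum_enum_val; apply: eq_bigr => j _; rewrite !mxE.
Qed.

Lemma trnorm_mx_of_comp (T T' : finType) (e : T' -> T) (f : T -> T -> algC) :
  bijective e -> trnorm (mx_of (fun x y => f (e x) (e y))) = trnorm (mx_of f).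
Proof.
move=> e_bij; rewrite [RHS]trnorm_spectral.
have /orthomx_spectralP := adjmx_mul_normal (mx_of f).
set A := adjmx _ *m _; set P := spectralmx A; set D := spectral_diag A => AP.
have P_unit : P \in unitmx by exact: spectral_unit.
apply: (@trnorm_mx_of_factor _ _ _ (fun x k => invmx P (enum_rank (e x)) k)
   (fun k y => P k (enum_rank (e y))) (fun k => D 0 k)).
- move=> x y; rewrite mulVmxE //.
  by rewrite (inj_eq enum_rank_inj) (inj_eq (bij_inj e_bij)).
- move=> u v.
  rewrite (@sum_comp_bij _ _ _ e (fun z => P u (enum_rank z) * invmx P (enum_rank z) v)) //.
  by rewrite (@sum_enum_rank _ T (fun i => P u i * invmx P i v)) mulmxVE.
- move=> x y.
  rewrite (@sum_comp_bij _ _ _ e (fun z => (f z (e x))^* * f z (e y))) //.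
  transitivity (A (enum_rank (e x)) (enum_rank (e y))).
    rewrite /A mxE -(sum_enum_val (fun z => (f z (e x))^* * f z (e y))).
    by apply: eq_bigr => l _; rewrite /adjmx !mxE !enum_rankK.
  by rewrite [in LHS]AP mul_mx_diag_mxE.
Qed.

Section PureBipartite.
Variables (S R : finType) (psi : S * R -> algC).

Definition coef_mx : 'M[algC]_(#|S|, #|R|) := \matrix_(i, j) psi (enum_val i, enum_val j).

Definition pt_pure (x y : S * R) : algC := psi (y.1, x.2) * (psi (x.1, y.2))^*.

Definition purity : algC :=
  \sum_s \sum_s' (\sum_r psi (s, r) * (psi (s', r))^*) * (\sum_r psi (s', r) * (psi (s, r))^*).

Local Notation specS := (spectral_diag (gram coef_mx)).
Local Notation specR := (spectral_diag (gram coef_mx^T)).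

Lemma gram_coef_mxE s s' :
  gram coef_mx (enum_rank s) (enum_rank s') = \sum_r psi (s, r) * (psi (s', r))^*.
Proof.
rewrite mxE -(sum_enum_val (fun r => psi (s, r) * (psi (s', r))^*)).
by apply: eq_bigr => j _; rewrite !mxE !enum_rankK.
Qed.

Lemma gram_coef_trmxE r r' :
  gram coef_mx^T (enum_rank r) (enum_rank r') = \sum_s psi (s, r) * (psi (s, r'))^*.
Proof.
rewrite mxE -(sum_enum_val (fun s => psi (s, r) * (psi (s, r'))^*)).
by apply: eq_bigr => j _; rewrite !mxE !enum_rankK.
Qed.

Lemma trnorm_pt_pure :
  trnorm (mx_of pt_pure) = (\sum_k sqrtC (specS 0 k)) * (\sum_l sqrtC (specR 0 l)).
Proof.
have /orthomx_spectralP gramS := gram_normal coef_mx.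
have /orthomx_spectralP gramR := gram_normal coef_mx^T.
set PS := spectralmx (gram coef_mx) in gramS *.
set PR := spectralmx (gram coef_mx^T) in gramR *.
have PS_unit : PS \in unitmx by exact: spectral_unit.
have PR_unit : PR \in unitmx by exact: spectral_unit.
(* Diagonalize [rho_S^T (x) rho_R] in the product of the spectral bases of
   the two Gram matrices. *)
rewrite (@trnorm_mx_of_factor _ _ _
  (fun x u => PS u.1 (enum_rank x.1) * invmx PR (enum_rank x.2) u.2)
  (fun u y => invmx PS (enum_rank y.1) u.1 * PR u.2 (enum_rank y.2))
  (fun u => specS 0 u.1 * specR 0 u.2)).
- rewrite big_distrlr /= pair_bigA; apply: eq_bigr => -[k l] _ /=.
  by rewrite sqrtCM // nnegrE spectral_diag_gram_ge0.
- move=> x y.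
  transitivity ((\sum_k invmx PS (enum_rank y.1) k * PS k (enum_rank x.1)) *
                (\sum_l invmx PR (enum_rank x.2) l * PR l (enum_rank y.2))).
    by rewrite big_distrlr /= pair_bigA; apply: eq_bigr => -[k l] _ /=; ring.
  rewrite !mulVmxE // !(inj_eq enum_rank_inj) -natrM mulnb.
  by case: x y => [x1 x2] [y1 y2]; rewrite xpair_eqE eq_sym.
- move=> u v.
  transitivity ((\sum_s PS v.1 (enum_rank s) * invmx PS (enum_rank s) u.1) *
                (\sum_r PR u.2 (enum_rank r) * invmx PR (enum_rank r) v.2)).
    by rewrite big_distrlr /= pair_bigA; apply: eq_bigr => -[s r] _ /=; ring.
  rewrite (sum_enum_rank (fun i => PS v.1 i * invmx PS i u.1)).
  rewrite (sum_enum_rank (fun i => PR u.2 i * invmx PR i v.2)).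
  rewrite !mulmxVE // -natrM mulnb.
  by case: u v => [u1 u2] [v1 v2]; rewrite xpair_eqE eq_sym.
- move=> x y.
  transitivity (gram coef_mx (enum_rank y.1) (enum_rank x.1) *
                gram coef_mx^T (enum_rank x.2) (enum_rank y.2)).
    rewrite gram_coef_mxE gram_coef_trmxE big_distrlr /= exchange_big pair_bigA.
    apply: eq_bigr => -[s r] _; rewrite /pt_pure rmorphM /= conjCK.
    by rewrite mulrACA [_^* * _]mulrC.
  rewrite [in X in X * _]gramS [in X in _ * X]gramR !mul_mx_diag_mxE.
  by rewrite big_distrlr /= pair_bigA; apply: eq_bigr => -[k l] _ /=; ring.
Qed.

Lemma tr_gram_coef_mx : \tr (gram coef_mx) = \sum_x `|psi x| ^+ 2.
Proof.
rewrite /mxtrace sum_pairE -(sum_enum_val (fun s => \sum_r `|psi (s, r)| ^+ 2)).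
apply: eq_bigr => i _; rewrite mxE -(sum_enum_val (fun r => `|psi (enum_val i, r)| ^+ 2)).
by apply: eq_bigr => j _; rewrite !mxE normCK.
Qed.

Lemma tr_gram_coef_trmx : \tr (gram coef_mx^T) = \sum_x `|psi x| ^+ 2.
Proof.
rewrite /mxtrace sum_pairE exchange_big -(sum_enum_val (fun r => \sum_s `|psi (s, r)| ^+ 2)).
apply: eq_bigr => i _; rewrite mxE -(sum_enum_val (fun s => `|psi (s, enum_val i)| ^+ 2)).
by apply: eq_bigr => j _; rewrite !mxE normCK.
Qed.

Lemma tr_sqr_gram_coef_mx : \tr (gram coef_mx *m gram coef_mx) = purity.
Proof.
rewrite /mxtrace -(sum_enum_rank (fun i => (gram coef_mx *m gram coef_mx) i i)).
apply: eq_bigr => s _; rewrite mxE.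
rewrite -(sum_enum_rank (fun j => gram coef_mx (enum_rank s) j * gram coef_mx j (enum_rank s))).
by apply: eq_bigr => s' _; rewrite !gram_coef_mxE.
Qed.

Lemma tr_sqr_gram_coef_trmx : \tr (gram coef_mx^T *m gram coef_mx^T) = purity.
Proof.
rewrite -tr_sqr_gram_coef_mx /gram -mxtrace_tr !trmx_mul !trmxK.
by rewrite -!mulmxA mxtrace_mulC !mulmxA /adjmx map_trmx trmxK.
Qed.

Hypothesis psi_normed : \sum_x `|psi x| ^+ 2 = 1.

Let specS_ge0 k : 0 <= specS 0 k. Proof. exact: spectral_diag_gram_ge0. Qed.
Let specR_ge0 k : 0 <= specR 0 k. Proof. exact: spectral_diag_gram_ge0. Qed.

Let sum_specS : \sum_k specS 0 k = 1.
Proof. by rewrite sum_spectral_diag ?gram_normal // tr_gram_coef_mx. Qed.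
Let sum_specR : \sum_k specR 0 k = 1.
Proof. by rewrite sum_spectral_diag ?gram_normal // tr_gram_coef_trmx. Qed.

Let sum_specS_sqr : \sum_k specS 0 k ^+ 2 = purity.
Proof. by rewrite sum_spectral_diag_sqr ?gram_normal // tr_sqr_gram_coef_mx. Qed.
Let sum_specR_sqr : \sum_k specR 0 k ^+ 2 = purity.
Proof. by rewrite sum_spectral_diag_sqr ?gram_normal // tr_sqr_gram_coef_trmx. Qed.

Lemma one_sub_purity_ge0 : 0 <= 1 - purity.
Proof. by rewrite -sum_specS_sqr one_sub_sum_sqr_ge0. Qed.

Lemma trnorm_pt_pure_bounds k : (\rank coef_mx <= k)%N ->
  1 + sqrtC (2 * (1 - purity)) <= trnorm (mx_of pt_pure)
    <= 1 + sqrtC ((k * (k - 1))%:R * (1 - purity)).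
Proof.
move=> rank_k; rewrite trnorm_pt_pure.
have card_specS : leq #|[pred i | specS 0 i != 0]| k.
  apply: leq_trans (card_spectral_diag_neq0 (gram_normal _)) _.
  exact: leq_trans (mxrankM_maxl _ _) rank_k.
have card_specR : leq #|[pred i | specR 0 i != 0]| k.
  apply: leq_trans (card_spectral_diag_neq0 (gram_normal _)) _.
  by apply: leq_trans (mxrankM_maxl _ _) _; rewrite mxrank_tr.
apply: mulr_between_sqr; try by apply: sumr_ge0 => i _; rewrite sqrtC_ge0.
  by rewrite -sum_specS_sqr sqr_sum_sqrtC_lower ?sqr_sum_sqrtC_upper.
by rewrite -sum_specR_sqr sqr_sum_sqrtC_lower ?sqr_sum_sqrtC_upper.
Qed.

End PureBipartite.

Definition split_A_BC {dA dB dC : nat} (x : 'I_dA * ('I_dB * 'I_dC)) : idx3 dA dB dC :=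
  ((x.1, x.2.1), x.2.2).
Definition split_AC_B {dA dB dC : nat} (x : ('I_dA * 'I_dC) * 'I_dB) : idx3 dA dB dC :=
  ((x.1.1, x.2), x.1.2).
(* Eta-expanded so that [pt_pure (psi \o split_AB_C)] is convertible to
   [ptAB (proj_state psi)]. *)
Definition split_AB_C {dA dB dC : nat} (x : ('I_dA * 'I_dB) * 'I_dC) : idx3 dA dB dC :=
  ((x.1.1, x.1.2), x.2).

Lemma split_A_BC_bij dA dB dC : bijective (@split_A_BC dA dB dC).
Proof. by exists (fun x => (x.1.1, (x.1.2, x.2))) => [[a [b c]]|[[a b] c]]. Qed.

Lemma split_AC_B_bij dA dB dC : bijective (@split_AC_B dA dB dC).
Proof. by exists (fun x => ((x.1.1, x.2), x.1.2)) => [[[a c] b]|[[a b] c]]. Qed.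

Lemma split_AB_C_bij dA dB dC : bijective (@split_AB_C dA dB dC).
Proof. by exists id => [[[a b] c]|[[a b] c]]. Qed.

Section PurityInequality.
Variables (dA dB dC : nat) (psi : idx3 dA dB dC -> algC).

Definition sum6 (F : 'I_dA -> 'I_dA -> 'I_dB -> 'I_dB -> 'I_dC -> 'I_dC -> algC) :=
  \sum_a \sum_a' \sum_b \sum_b' \sum_c \sum_c' F a a' b b' c c'.

Lemma eq_sum6 F G : (forall a a' b b' c c', F a a' b b' c c' = G a a' b b' c c') ->
  sum6 F = sum6 G.
Proof.
move=> FG; do 6!(apply: eq_bigr => ? _); exact: FG.
Qed.

Lemma sum6D F G :
  sum6 (fun a a' b b' c c' => F a a' b b' c c' + G a a' b b' c c') = sum6 F + sum6 G.
Proof. by rewrite /sum6; do 6!(rewrite -big_split; apply: eq_bigr => ? _). Qed.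

Lemma sum6N F : sum6 (fun a a' b b' c c' => - F a a' b b' c c') = - sum6 F.
Proof. by rewrite /sum6; do 6!(rewrite -sumrN; apply: eq_bigr => ? _). Qed.

Lemma sum6_ge0 F : (forall a a' b b' c c', 0 <= F a a' b b' c c') -> 0 <= sum6 F.
Proof. by move=> F_ge0; do 6!(apply: sumr_ge0 => ? _). Qed.

Lemma sum6_swap_b F : sum6 F = sum6 (fun a a' b b' c c' => F a a' b' b c c').
Proof. by apply: eq_bigr => a _; apply: eq_bigr => a' _; exact: exchange_big. Qed.

Lemma sum6_swap_c F : sum6 F = sum6 (fun a a' b b' c c' => F a a' b b' c' c).
Proof. by do 4!(apply: eq_bigr => ? _); exact: exchange_big. Qed.

Local Notation amp2 a a' b b' c c' := (psi ((a, b), c) * psi ((a', b'), c')).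

Lemma antisymmetrized_amp2_ge0 :
  0 <= sum6 (fun a a' b b' c c' => amp2 a a' b b' c c' *
    (amp2 a a' b b' c c' - amp2 a a' b' b c c' - amp2 a a' b b' c' c + amp2 a a' b' b c' c)^*).
Proof.
pose w a a' b b' c c' :=
  amp2 a a' b b' c c' - amp2 a a' b' b c c' - amp2 a a' b b' c' c + amp2 a a' b' b c' c.
have w_swap_b a a' b b' c c' : w a a' b' b c c' = - w a a' b b' c c' by rewrite /w; ring.
have w_swap_c a a' b b' c c' : w a a' b b' c' c = - w a a' b b' c c' by rewrite /w; ring.
change (0 <= sum6 (fun a a' b b' c c' => amp2 a a' b b' c c' * (w a a' b b' c c')^*)).
set X := sum6 _.
(* [w] is antisymmetric in [b, b'] and in [c, c'], so each of the four terms
   of [w * w^*] sums to [X]. *)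
have swap_b : sum6 (fun a a' b b' c c' => - (amp2 a a' b' b c c' * (w a a' b b' c c')^*)) = X.
  by rewrite sum6_swap_b; apply: eq_sum6 => *; rewrite w_swap_b rmorphN mulrN opprK.
have swap_c : sum6 (fun a a' b b' c c' => - (amp2 a a' b b' c' c * (w a a' b b' c c')^*)) = X.
  by rewrite sum6_swap_c; apply: eq_sum6 => *; rewrite w_swap_c rmorphN mulrN opprK.
have swap_bc : sum6 (fun a a' b b' c c' => amp2 a a' b' b c' c * (w a a' b b' c c')^*) = X.
  by rewrite sum6_swap_b sum6_swap_c; apply: eq_sum6 => *; rewrite w_swap_c w_swap_b opprK.
have : 0 <= sum6 (fun a a' b b' c c' => w a a' b b' c c' * (w a a' b b' c c')^*).
  by apply: sum6_ge0 => *; rewrite mul_conjC_ge0.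
have -> : sum6 (fun a a' b b' c c' => w a a' b b' c c' * (w a a' b b' c c')^*) =
    X + sum6 (fun a a' b b' c c' => - (amp2 a a' b' b c c' * (w a a' b b' c c')^*))
      + sum6 (fun a a' b b' c c' => - (amp2 a a' b b' c' c * (w a a' b b' c c')^*))
      + sum6 (fun a a' b b' c c' => amp2 a a' b' b c' c * (w a a' b b' c c')^*).
  by rewrite -!sum6D; apply: eq_sum6 => *; rewrite {1}/w !mulrDl !mulNr.
rewrite swap_b swap_c swap_bc.
have -> : X + X + X + X = 4 * X by clearbody X; ring.
by rewrite pmulr_rge0.
Qed.

Lemma sum6_sqr_norm : (\sum_x `|psi x| ^+ 2) ^+ 2 =
  sum6 (fun a a' b b' c c' => amp2 a a' b b' c c' * (amp2 a a' b b' c c')^*).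
Proof.
have -> : \sum_x `|psi x| ^+ 2 = \sum_a \sum_b \sum_c psi ((a, b), c) * (psi ((a, b), c))^*.
  rewrite sum_pairE sum_pairE; do 3!(apply: eq_bigr => ? _); exact: normCK.
rewrite expr2 big_distrlr; apply: eq_bigr => a _; apply: eq_bigr => a' _.
rewrite big_distrlr; apply: eq_bigr => b _; apply: eq_bigr => b' _.
rewrite big_distrlr; apply: eq_bigr => c _; apply: eq_bigr => c' _.
by rewrite rmorphM /=; ring.
Qed.

Lemma purity_A_BC : purity (psi \o split_A_BC) =
  sum6 (fun a a' b b' c c' => amp2 a a' b b' c c' * (amp2 a a' b' b c' c)^*).
Proof.
apply: eq_bigr => a _; apply: eq_bigr => a' _; rewrite !sum_pairE.
rewrite big_distrlr; apply: eq_bigr => b _; apply: eq_bigr => b' _.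
rewrite big_distrlr; apply: eq_bigr => c _; apply: eq_bigr => c' _.
by rewrite rmorphM /=; ring.
Qed.

Lemma purity_AC_B : purity (psi \o split_AC_B) =
  sum6 (fun a a' b b' c c' => amp2 a a' b b' c c' * (amp2 a a' b' b c c')^*).
Proof.
rewrite /purity sum_pairE; apply: eq_bigr => a _.
under eq_bigr do rewrite sum_pairE.
rewrite exchange_big; apply: eq_bigr => a' _.
under eq_bigr do under eq_bigr do rewrite big_distrlr.
rewrite exchange_big2; apply: eq_bigr => b _; apply: eq_bigr => b' _.
apply: eq_bigr => c _; apply: eq_bigr => c' _.
by rewrite rmorphM /=; ring.
Qed.

Lemma purity_AB_C : purity (psi \o split_AB_C) =
  sum6 (fun a a' b b' c c' => amp2 a a' b b' c c' * (amp2 a a' b b' c' c)^*).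
Proof.
rewrite /purity sum_pairE; apply: eq_bigr => a _.
under eq_bigr do rewrite sum_pairE.
rewrite exchange_big; apply: eq_bigr => a' _; apply: eq_bigr => b _; apply: eq_bigr => b' _.
rewrite big_distrlr; apply: eq_bigr => c _; apply: eq_bigr => c' _.
by rewrite rmorphM /=; ring.
Qed.

Lemma purity_subadd :
  purity (psi \o split_AC_B) + purity (psi \o split_AB_C) <=
    (\sum_x `|psi x| ^+ 2) ^+ 2 + purity (psi \o split_A_BC).
Proof.
rewrite -subr_ge0 sum6_sqr_norm purity_A_BC purity_AC_B purity_AB_C.
apply: le_trans antisymmetrized_amp2_ge0 _.
rewrite addrAC opprD addrA -!sum6N -!sum6D le_eqVlt; apply/orP; left; apply/eqP.
by apply: eq_sum6 => *; rewrite !rmorphD !rmorphN /= !mulrDr !mulrN.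
Qed.

End PurityInequality.

Section TripartiteNegativity.
Variables (dA dB dC : nat) (psi : idx3 dA dB dC -> algC).
Local Notation rho := (proj_state psi).

Lemma neg_A_CB_pure : neg_A_CB rho = (trnorm (mx_of (pt_pure (psi \o split_A_BC))) - 1) / 2%:R.
Proof. by rewrite /neg_A_CB /negativity_of_pt -(trnorm_mx_of_comp _ (split_A_BC_bij _ _ _)). Qed.

Lemma neg_AC_B_pure : neg_AC_B rho = (trnorm (mx_of (pt_pure (psi \o split_AC_B))) - 1) / 2%:R.
Proof. by rewrite /neg_AC_B /negativity_of_pt -(trnorm_mx_of_comp _ (split_AC_B_bij _ _ _)). Qed.

Lemma neg_AB_C_pure : neg_AB_C rho = (trnorm (mx_of (pt_pure (psi \o split_AB_C))) - 1) / 2%:R.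
Proof. by rewrite /neg_AB_C /negativity_of_pt -(trnorm_mx_of_comp _ (split_AB_C_bij _ _ _)). Qed.

Lemma mxrank_coef_mx_A_BC : (\rank (coef_mx (psi \o split_A_BC)) <= \rank (reducedA rho))%N.
Proof.
apply: leq_trans (mxrank_gram _) _.
have -> : gram (coef_mx (psi \o split_A_BC)) = mxsub enum_val enum_val (reducedA rho).
  apply/matrixP => i j; rewrite -[i]enum_valK -[j]enum_valK gram_coef_mxE !mxE !enum_rankK.
  by rewrite sum_pairE; apply: eq_bigr => b _; apply: eq_bigr => c _.
exact: mxrank_mxsub.
Qed.

Hypothesis psi_normed : \sum_x `|psi x| ^+ 2 = 1.

Lemma normed_comp (T : finType) (e : T -> idx3 dA dB dC) : bijective e ->
  \sum_x `|(psi \o e) x| ^+ 2 = 1.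
Proof. by move=> e_bij; rewrite -psi_normed; exact: sum_comp_bij. Qed.

Lemma linear_entropy_subadd :
  1 - purity (psi \o split_A_BC) <=
    (1 - purity (psi \o split_AC_B)) + (1 - purity (psi \o split_AB_C)).
Proof.
have := purity_subadd psi; rewrite psi_normed expr1n.
move: (purity (psi \o split_A_BC)) (purity (psi \o split_AC_B)) (purity (psi \o split_AB_C)).
move=> pA pB pC subadd.
rewrite -subr_ge0 (_ : 1 - pB + (1 - pC) - (1 - pA) = 1 + pA - (pB + pC)) ?subr_ge0 //.
by ring.
Qed.

End TripartiteNegativity.

Lemma weighted_negativity_le (K QA QB QC tA tB tC : algC) : 0 < K ->
  0 <= QA -> 0 <= QB -> 0 <= QC -> QA <= QB + QC ->
  tA <= 1 + sqrtC (K * QA) -> 1 + sqrtC (2 * QB) <= tB -> 1 + sqrtC (2 * QC) <= tC ->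
  sqrtC (2%:R / K) * ((tA - 1) / 2%:R) <= (tB - 1) / 2%:R + (tC - 1) / 2%:R.
Proof.
move=> K_gt0 QA_ge0 QB_ge0 QC_ge0 QABC tA_le tB_ge tC_ge.
rewrite -mulrDl [X in X <= _]mulrA ler_wpM2r ?invr_ge0 ?ler0n //.
have c_ge0 : 0 <= 2%:R / K by rewrite divr_ge0 ?ler0n // ltW.
have KQA_ge0 : 0 <= K * QA by rewrite mulr_ge0 // ltW.
apply: le_trans (_ : sqrtC (2%:R / K) * sqrtC (K * QA) <= _).
  by rewrite ler_wpM2l ?sqrtC_ge0 // lerBlDl.
rewrite -sqrtCM ?nnegrE // mulrA mulfVK ?gt_eqF //.
apply: le_trans (_ : sqrtC (2 * QB + 2 * QC) <= _).
  by rewrite ler_sqrtC ?nnegrE ?addr_ge0 ?mulr_ge0 // -mulrDr ler_wpM2l.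
apply: le_trans (sqrtC_addr_le _ _) _; rewrite ?mulr_ge0 //.
by apply: lerD; rewrite lerBrDl.
Qed.

Theorem lemma1 (dA dB dC : nat) (psi : idx3 dA dB dC -> algC) :
  \sum_x `|psi x| ^+ 2 = 1 ->
  (2 <= \rank (reducedA (proj_state psi)))%N ->
  sqrtC (2%:R / ((\rank (reducedA (proj_state psi)))%:R *
                 ((\rank (reducedA (proj_state psi)))%:R - 1)))
    * neg_A_CB (proj_state psi)
  <= neg_AC_B (proj_state psi) + neg_AB_C (proj_state psi).
Proof.
set r := \rank _ => psi_normed r_ge2.
have K_natE : (r * (r - 1))%:R = r%:R * (r%:R - 1) :> algC by rewrite natrM natrB // ltnW.
have K_gt0 : 0 < r%:R * (r%:R - 1) :> algC.
  by rewrite -K_natE ltr0n muln_gt0 subn_gt0 r_ge2 ltnW.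
have normed_A := normed_comp psi_normed (split_A_BC_bij _ _ _).
have normed_B := normed_comp psi_normed (split_AC_B_bij _ _ _).
have normed_C := normed_comp psi_normed (split_AB_C_bij _ _ _).
have /andP[_ upper_A] := trnorm_pt_pure_bounds normed_A (mxrank_coef_mx_A_BC psi).
have /andP[lower_B _] := trnorm_pt_pure_bounds normed_B (leqnn _).
have /andP[lower_C _] := trnorm_pt_pure_bounds normed_C (leqnn _).
rewrite K_natE in upper_A; rewrite neg_A_CB_pure neg_AC_B_pure neg_AB_C_pure.
exact: (weighted_negativity_le K_gt0 (one_sub_purity_ge0 normed_A)
  (one_sub_purity_ge0 normed_B) (one_sub_purity_ge0 normed_C)
  (linear_entropy_subadd psi_normed) upper_A lower_B lower_C).
Qed.
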